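(* Let $n\ge1$ and let $A:\mathbb{Z}^n\to\mathbb{C}$ be a function with $T'_{l_i,l_{i+1}}A(l_1,\ldots,l_n)=0$ for all $i$ with $1\le i<n$. Then $$T'_{k_i,k_{i+1}}\left(\sum_{(l_1,\ldots,l_n)}^{(k_1,\ldots,k_{n+1})}A(l_1,\ldots,l_n)\right)(k_1,\ldots,k_{n+1})=0$$ for all $i$ with $1\le i\le n$.
   Context: Extended interval sums: $\sum_{i=a}^b F(i)=F(a)+\cdots+F(b)$ if $a\le b$, $=0$ if $b=a-1$, and $=-F(b+1)-\cdots-F(a-1)$ if $b+1\le a-1$. For functions $A$ on $\mathbb{Z}^{m-1}$ and $(k_1,\ldots,k_m)\in\mathbb{Z}^m$ define recursively $\sum_{(l_1)}^{(k_1,k_2)}A(l_1)=\sum_{l_1=k_1}^{k_2}A(l_1)$ and, for $m>2$, $$\sum_{(l_1,\ldots,l_{m-1})}^{(k_1,\ldots,k_m)}A=\sum_{(l_1,\ldots,l_{m-2})}^{(k_1,\ldots,k_{m-1})}\sum_{l_{m-1}=k_{m-1}+1}^{k_m}A(l_1,\ldots,l_{m-1})+\sum_{(l_1,\ldots,l_{m-2})}^{(k_1,\ldots,k_{m-1}-1)}A(l_1,\ldots,l_{m-2},k_{m-1}).$$ For variables $x,y$: $E_x$ is the shift $E_xF(x)=F(x+1)$ (other variables fixed), $\Delta_x=E_x-\operatorname{id}$, $S_{x,y}$ swaps $x$ and $y$, and $T'_{x,y}=(\operatorname{id}+S_{x,y})(\operatorname{id}+E_y\Delta_x)$; products of operators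 are compositions. *)

From HB Require Import structures.
From mathcomp Require Import all_boot all_order all_algebra.
From mathcomp Require Import complex reals.
Set Implicit Arguments. Unset Strict Implicit. Unset Printing Implicit Defensive.
Import Order.TTheory GRing.Theory Num.Theory.
Local Open Scope ring_scope.

(* Points of Z^m are represented as lists of integers of size m;
   coordinate x_1,...,x_m is stored at (0-based) position 0,...,m-1. *)

Section Defs.
Variable V : zmodType.

Definition isum (a b : int) (F : int -> V) : V :=
  if a <= b then \sum_(0 <= j < (absz (b - a + 1)%R)) F (a + j%:Z)
  else - \sum_(0 <= j < (absz (a - 1 - b)%R)) F (b + 1 + j%:Z).

(* msum m k A = \sum_{(l_1,..,l_m)}^{(k_1,..,k_{m+1})} A(l_1,..,l_m),
   for k of size m+1 and A a function on lists of size m. *)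
Fixpoint msum (m : nat) (k : seq int) (A : seq int -> V) {struct m} : V :=
  match m with
  | 0%N => 0
  | 1%N => isum (nth 0 k 0) (nth 0 k 1) (fun l1 => A [:: l1])
  | (m'.+1) as m1 =>
      (* here m1 = m'+1 >= 2: k = (k_1,...,k_{m1+1}),
         k_{m1} sits at index m', k_{m1+1} at index m1 *)
      msum m' (take m1 k)
        (fun l => isum (nth 0 k m' + 1) (nth 0 k m1) (fun x => A (rcons l x)))
      + msum m' (rcons (take m' k) (nth 0 k m' - 1))
        (fun l => A (rcons l (nth 0 k m')))
  end.

Definition Eop (x : nat) (F : seq int -> V) : seq int -> V :=
  fun l => F (set_nth 0 l x (nth 0 l x + 1)).

Definition Dop (x : nat) (F : seq int -> V) : seq int -> V :=
  fun l => Eop x F l - F l.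

Definition swapl (x y : nat) (l : seq int) : seq int :=
  set_nth 0 (set_nth 0 l x (nth 0 l y)) y (nth 0 l x).

Definition Sop (x y : nat) (F : seq int -> V) : seq int -> V :=
  fun l => F (swapl x y l).

Definition Tp (x y : nat) (F : seq int -> V) : seq int -> V :=
  let H := fun l => F l + Eop y (Dop x F) l in
  fun l => H l + Sop x y H l.

End Defs.

From HB Require Import structures.
From mathcomp Require Import all_boot all_order all_algebra.
From mathcomp Require Import complex reals.
From mathcomp Require Import ring zify.
Import Order.TTheory GRing.Theory Num.Theory.
Local Open Scope ring_scope.

Set Implicit Arguments. Unset Strict Implicit. Unset Printing Implicit Defensive.

(* Splitting off the last
   summation index writes the (m+1)-fold sum over (k_1,...,k_{m+2}) as two m-fold sums
   whose summands depend on k_{m+1}, k_{m+2} only as parameters; so T' acting on an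
   earlier pair of coordinates passes to these summands and induction on m applies.
   If T' acts on the last pair, or on the pair before it, the claim becomes that two
   explicit summation operators, in two and in three integer variables ([sum_step],
   [sum_step2]), map kernel functions of T' to kernel functions of T'. These are
   identities between extended sums, checked by expressing every sum through a
   two-dimensional primitive and inducting on the summation bounds. *)

Lemma int_step_const (T : Type) (Phi : int -> T) :
  (forall x, Phi (x + 1) = Phi x) -> forall x y, Phi x = Phi y.
Proof.
move=> step; suff Phi0 : forall x, Phi x = Phi 0 by move=> x y; rewrite !Phi0.
elim/int_ind=> [//|n IH|n IH]; first by rewrite intS addrC step.
have := step (- n.+1%:Z); rewrite intS opprD addrAC addNr add0r => <-.
exact: IH.
Qed.

Section IntervalSum.
Variable V : zmodType.
Implicit Types (F G : int -> V) (a b c : int).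

Lemma eq_by_increments (S T : int -> V) F c :
  (forall b, S (b + 1) = S b + F (b + 1)) ->
  (forall b, T (b + 1) = T b + F (b + 1)) ->
  S c = T c -> forall b, S b = T b.
Proof.
move=> incS incT eqc b; apply/subr0_eq.
rewrite (@int_step_const _ (fun x => S x - T x) _ b c) ?eqc ?subrr // => x.
by rewrite incS incT opprD addrACA subrr addr0.
Qed.

Lemma isum_upE a (n : nat) F :
  isum a (a + n%:Z - 1) F = \sum_(0 <= j < n) F (a + j%:Z).
Proof.
rewrite /isum; case: ifP => h.
  by have -> : absz (a + n%:Z - 1 - a + 1)%R = n by lia.
have -> : n = 0%N by lia.
have -> : absz (a - 1 - (a + 0%:Z - 1))%R = 0%N by lia.
by rewrite !big_geq ?oppr0.
Qed.

Lemma isum_downE a (n : nat) F :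
  isum a (a - n%:Z - 1) F = - \sum_(0 <= j < n) F (a - n%:Z + j%:Z).
Proof.
rewrite /isum; case: ifP => h.
  have -> : n = 0%N by lia.
  have -> : absz (a - 0%:Z - 1 - a + 1)%R = 0%N by lia.
  by rewrite !big_geq ?oppr0.
have -> : absz (a - 1 - (a - n%:Z - 1))%R = n by lia.
by congr (- _); apply: eq_bigr => j _; congr F; lia.
Qed.

Lemma isum_recr a b F : isum a (b + 1) F = isum a b F + F (b + 1).
Proof.
case: (lerP (a - 1) b) => h.
  have [n ->] : exists n : nat, b = a + n%:Z - 1 by exists (absz (b - a + 1)%R); lia.
  have -> : a + n%:Z - 1 + 1 = a + n.+1%:Z - 1 by lia.
  by rewrite !isum_upE big_nat_recr //=; congr (_ + F _); lia.
have [n ->] : exists n : nat, b = a - n.+1%:Z - 1 by exists (absz (a - 2 - b)%R); lia.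
have -> : a - n.+1%:Z - 1 + 1 = a - n%:Z - 1 by lia.
rewrite !isum_downE big_nat_recl // opprD.
have -> : F (a - n.+1%:Z + 0%:Z) = F (a - n%:Z - 1) by congr F; lia.
rewrite addrAC addNr add0r; congr (- _); apply: eq_bigr => j _; congr F; lia.
Qed.

Lemma isum_nil a F : isum a (a - 1) F = 0.
Proof. by have := isum_upE a 0 F; rewrite addr0 big_geq. Qed.

Lemma isum_predr a b F : isum a b F = isum a (b - 1) F + F b.
Proof. by rewrite -{1 3}(subrK 1 b) isum_recr. Qed.

Lemma eq_isum a b F G : (forall x, F x = G x) -> isum a b F = isum a b G.
Proof.
move=> eFG; apply: (@eq_by_increments (fun b => isum a b F) (fun b => isum a b G) F (a - 1)).
- by move=> x; rewrite isum_recr.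
- by move=> x; rewrite isum_recr eFG.
- by rewrite !isum_nil.
Qed.

Lemma isumD a b F G : isum a b (fun x => F x + G x) = isum a b F + isum a b G.
Proof.
apply: (@eq_by_increments (fun b => isum a b _) (fun b => isum a b F + isum a b G) (fun x => F x + G x) (a - 1)) => [x|x|].
- by rewrite isum_recr.
- by rewrite !isum_recr addrACA.
- by rewrite !isum_nil addr0.
Qed.

Lemma isumN a b F : isum a b (fun x => - F x) = - isum a b F.
Proof.
apply: (@eq_by_increments (fun b => isum a b _) (fun b => - isum a b F) (fun x => - F x) (a - 1)) => [x|x|].
- by rewrite isum_recr.
- by rewrite isum_recr opprD.
- by rewrite !isum_nil oppr0.
Qed.

Lemma isumB a b F G : isum a b (fun x => F x - G x) = isum a b F - isum a b G.
Proof. by rewrite isumD isumN. Qed.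

Lemma isum0 a b : isum a b (fun _ => 0 : V) = 0.
Proof.
apply: (@eq_by_increments (fun b => isum a b _) (fun _ => 0) (fun _ => 0) (a - 1)) => [x|x|].
- by rewrite isum_recr.
- by rewrite addr0.
- by rewrite isum_nil.
Qed.

Lemma isum_cat a c b F : isum a b F = isum a c F + isum (c + 1) b F.
Proof.
apply: (@eq_by_increments (fun b => isum a b F) (fun b => isum a c F + isum (c + 1) b F) F c) => [x|x|].
- by rewrite isum_recr.
- by rewrite isum_recr addrA.
- by rewrite [isum (c + 1) c F](_ : _ = 0) ?addr0 // -{2}(addrK 1 c) isum_nil.
Qed.

Lemma isum1 a F : isum a a F = F a.
Proof. by rewrite isum_predr isum_nil add0r. Qed.

Lemma isum_recl a b F : isum a b F = F a + isum (a + 1) b F.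
Proof. by rewrite (isum_cat a a) isum1. Qed.

Lemma isum_prefixE a b F : isum a b F = isum 0 b F - isum 0 (a - 1) F.
Proof. by rewrite (isum_cat 0 (a - 1)) subrK addrC addKr. Qed.

Lemma isum_shift a b F : isum a b (fun x => F (x + 1)) = isum (a + 1) (b + 1) F.
Proof.
apply: (@eq_by_increments (fun b => isum a b _) (fun b => isum (a + 1) (b + 1) F) (fun x => F (x + 1)) (a - 1))
  => [x|x|].
- by rewrite isum_recr.
- by rewrite isum_recr.
- by rewrite isum_nil subrK -{2}(addrK 1 a) isum_nil.
Qed.

Lemma isum_telescope a b F : isum a b (fun t => F t - F (t - 1)) = F b - F (a - 1).
Proof.
apply: (@eq_by_increments (fun b => isum a b _) (fun b => F b - F (a - 1)) (fun t => F t - F (t - 1)) (a - 1))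
  => [x|x|].
- by rewrite isum_recr.
- by rewrite addrK [RHS]addrC addrA subrK.
- by rewrite isum_nil subrr.
Qed.

End IntervalSum.

Section Primitive2.
Variable C : comPzRingType.
Variable H : int -> int -> C.

Definition primitive2 (y x : int) := isum 0 x (fun x' => isum 0 y (fun y' => H y' x')).

Lemma isum_fst_primitive2 y x :
  isum 0 y (fun y' => H y' x) = primitive2 y x - primitive2 y (x - 1).
Proof. by rewrite /primitive2 (isum_predr 0 x) addrC addKr. Qed.

Lemma primitive2_diff2 y x :
  H y x = primitive2 y x - primitive2 (y - 1) x - primitive2 y (x - 1) + primitive2 (y - 1) (x - 1).
Proof.
have -> : H y x = isum 0 y (fun y' => H y' x) - isum 0 (y - 1) (fun y' => H y' x).
  by rewrite (isum_predr 0 y) addrC addKr.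
by rewrite !isum_fst_primitive2; ring.
Qed.

Lemma isum_fstE m n x0 : isum m n (fun y => H y x0) =
  primitive2 n x0 - primitive2 n (x0 - 1) - primitive2 (m - 1) x0 + primitive2 (m - 1) (x0 - 1).
Proof. by rewrite isum_prefixE !isum_fst_primitive2; ring. Qed.

Lemma isum2E m n m' n' : isum m n (fun x => isum m' n' (fun y => H y x)) =
  primitive2 n' n - primitive2 (m' - 1) n - primitive2 n' (m - 1) + primitive2 (m' - 1) (m - 1).
Proof.
rewrite (@eq_isum _ m n _ (fun x => isum 0 n' (fun y => H y x) - isum 0 (m' - 1) (fun y => H y x))).
  by rewrite isumB !(isum_prefixE m n) /primitive2; ring.
by move=> x; rewrite isum_prefixE.
Qed.

Lemma isum_sndE m n y0 : isum m n (fun x => H y0 x) =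
  primitive2 y0 n - primitive2 (y0 - 1) n - primitive2 y0 (m - 1) + primitive2 (y0 - 1) (m - 1).
Proof. by rewrite -isum2E; apply: eq_isum => x; rewrite isum1. Qed.

End Primitive2.

Lemma primitive2B (C : comPzRingType) (H1 H2 : int -> int -> C) y x :
  primitive2 (fun y x => H1 y x - H2 y x) y x = primitive2 H1 y x - primitive2 H2 y x.
Proof. by rewrite /primitive2 -isumB; apply: eq_isum => x'; rewrite isumB. Qed.

Section IsumShift.
Variables (V : zmodType) (H : int -> int -> V).

Lemma isum_shift_fst m n y0 :
  isum m n (fun t => H (t + 1) y0) = isum (m + 1) (n + 1) (fun t => H t y0).
Proof. exact: (isum_shift m n (fun t => H t y0)). Qed.

Lemma isum_shift_snd m n y0 :
  isum m n (fun t => H y0 (t + 1)) = isum (m + 1) (n + 1) (fun t => H y0 t).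
Proof. exact: (isum_shift m n (fun t => H y0 t)). Qed.

Lemma isum_unshift (F : int -> V) m n :
  isum m n (fun t => F (t - 1)) = isum (m - 1) (n - 1) F.
Proof.
rewrite -{1}(subrK 1 m) -{1}(subrK 1 n) -isum_shift.
by apply: eq_isum => t; rewrite addrK.
Qed.

Lemma isum_unshift_fst m n y0 :
  isum m n (fun t => H (t - 1) y0) = isum (m - 1) (n - 1) (fun t => H t y0).
Proof. exact: (isum_unshift (fun t => H t y0)). Qed.

Lemma isum_unshift_snd m n y0 :
  isum m n (fun t => H y0 (t - 1)) = isum (m - 1) (n - 1) (fun t => H y0 t).
Proof. exact: (isum_unshift (fun t => H y0 t)). Qed.

End IsumShift.

(* Every extended sum of a function H of two variables, along a line or over a
   rectangle, is an alternating sum of four values of [primitive2 H]; once each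
   value of H is also expanded this way, identities between such sums become
   ring identities. *)
Ltac isum_to_primitive2 :=
  rewrite ?isum_telescope ?(isumD, isumN);
  rewrite ?(isum_shift_fst, isum_shift_snd, isum_unshift_fst, isum_unshift_snd);
  rewrite ?isum2E ?isum_sndE ?isum_fstE ?primitive2B.

Ltac primitive2_ring diff2 :=
  isum_to_primitive2; rewrite ?diff2 ?addrK ?subrK; ring.

Section Tkernel.
Variable C : numDomainType.
Implicit Types f g D : int -> int -> C.

(* [Tinner f] is (id + E_v Delta_u) f, and [Tsym f] is T'_{u,v} f. *)
Definition Tinner f u v := f u v + f (u + 1) (v + 1) - f u (v + 1).
Definition Tsym f u v := Tinner f u v + Tinner f v u.
Definition Tker f := forall u v, Tsym f u v = 0.

Lemma Tker_ext f g : (forall u v, f u v = g u v) -> Tker f -> Tker g.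
Proof. by move=> efg hf u v; rewrite /Tsym /Tinner -!efg; apply: hf. Qed.

Lemma Tker0 : Tker (fun _ _ => 0).
Proof. by move=> u v; rewrite /Tsym /Tinner; ring. Qed.

Lemma TkerD f g : Tker f -> Tker g -> Tker (fun u v => f u v + g u v).
Proof.
move=> hf hg u v; rewrite -[RHS](addr0 0) -{1}(hf u v) -(hg u v) /Tsym /Tinner; ring.
Qed.

Lemma TkerB f g : Tker f -> Tker g -> Tker (fun u v => f u v - g u v).
Proof.
move=> hf hg u v; rewrite -[RHS](subrr 0) -{1}(hf u v) -(hg u v) /Tsym /Tinner; ring.
Qed.

Lemma Tker_isum c d (F : int -> int -> int -> C) : (forall x, Tker (F x)) ->
  Tker (fun u v => isum c d (fun x => F x u v)).
Proof.
move=> hF u v; rewrite /Tsym /Tinner -!isumD -!isumB -isumD.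
by rewrite (@eq_isum _ _ _ _ (fun _ => 0)) ?isum0 // => x; apply: hF.
Qed.

Lemma Tker_diag f : Tker f -> forall c, Tinner f c c = 0.
Proof. by move=> hf c; have /eqP := hf c c; rewrite /Tsym -mulr2n mulrn_eq0 => /eqP. Qed.

Lemma Tker_isum_line f : Tker f -> forall m n c,
  isum m n (fun t => f t c) + isum (m + 1) (n + 1) (fun t => f (c + 1) t)
  + f (n + 1) (c + 1) - f m (c + 1) + f c m - f c (n + 1) = 0.
Proof.
move=> hf m n c; rewrite -(isum0 C m n) -(eq_isum _ _ (fun t => hf t c)).
by rewrite /Tsym /Tinner; primitive2_ring (primitive2_diff2 f).
Qed.

Lemma eq0_up_to (x e k : C) : e = 0 -> x - k * e = 0 -> x = 0.
Proof. by move=> ->; rewrite mulr0 subr0. Qed.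

(* If D c x is the m-fold sum with last bound c of l |-> A(l, x), then [sum_step D a b]
   is the (m+1)-fold sum of A with last two bounds a, b (see [itsum_rcons2]). *)
Definition sum_step D a b := isum (a + 1) b (fun x => D a x) + D (a - 1) a.
Definition diff_fst D c x := D c x - D (c - 1) x.

Lemma Tker_sum_step D : Tker (diff_fst D) -> Tker (sum_step D).
Proof.
move=> hD a b.
have step b' : Tsym (sum_step D) a (b' + 1) = Tsym (sum_step D) a b'.
  apply/subr0_eq.
  apply: (eq0_up_to (k := 1) (Tker_isum_line hD (b' + 1) a (b' + 1))).
  apply: (eq0_up_to (k := -1) (Tker_diag hD (b' + 1))).
  by rewrite /Tsym /Tinner /sum_step /diff_fst; primitive2_ring (primitive2_diff2 D).
rewrite (int_step_const step b a).
by rewrite /Tsym /Tinner /sum_step; primitive2_ring (primitive2_diff2 D).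
Qed.

Definition sum_step2 (W : int -> int -> int -> C) b p a :=
  sum_step (fun c x => sum_step (fun c' y => W c' y x) p c) a b.

Lemma Tsym_sum_step2_indep (W : int -> int -> int -> C) :
  (forall x, Tker (diff_fst (fun c y => W c y x))) ->
  forall p a b b', Tsym (sum_step2 W b) p a = Tsym (sum_step2 W b') p a.
Proof.
move=> hW p a; apply: int_step_const => b; apply/subr0_eq.
apply: (eq0_up_to (k := 1) (Tker_sum_step (hW (b + 1)) p a)).
have W2 c := primitive2_diff2 (W c).
by rewrite /Tsym /Tinner /sum_step2 /sum_step /diff_fst; primitive2_ring W2.
Qed.

Lemma Tker_sum_step2_const g : Tker g -> forall b, Tker (sum_step2 (fun _ y x => g y x) b).
Proof.
move=> hg b p a.
have hdg x : Tker (diff_fst (fun (_ : int) y => g y x)).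
  by apply: (Tker_ext _ Tker0) => u v; rewrite /diff_fst subrr.
rewrite (Tsym_sum_step2_indep hdg p a b a).
pose Q a := Tsym (sum_step2 (fun _ y x => g y x) a) p a.
rewrite -/(Q a) (@int_step_const _ Q _ a p).
  by rewrite /Q /Tsym /Tinner /sum_step2 /sum_step; primitive2_ring (primitive2_diff2 g).
move=> a'; apply/subr0_eq.
apply: (eq0_up_to (k := -1) (Tker_isum_line hg p (a' - 1) a')).
apply: (eq0_up_to (k := -1) (Tker_diag hg a')).
by rewrite /Q /Tsym /Tinner /sum_step2 /sum_step; primitive2_ring (primitive2_diff2 g).
Qed.

Lemma Tker_sum_step2 (W : int -> int -> int -> C) :
  (forall c, Tker (W c)) -> (forall x, Tker (diff_fst (fun c y => W c y x))) ->
  forall b, Tker (sum_step2 W b).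
Proof.
move=> hW hdW b p a.
have hWW z : Tker (fun y x => W z y x - W (z - 1) y x) by apply: TkerB.
have W2 c := primitive2_diff2 (W c).
pose w c y x := W c y x - W p y x.
have hdw x : Tker (diff_fst (fun c y => w c y x)).
  by apply: (Tker_ext _ (hdW x)) => u v; rewrite /diff_fst /w; ring.
have -> : Tsym (sum_step2 W b) p a =
    Tsym (sum_step2 (fun _ y x => W p y x) b) p a + Tsym (sum_step2 w b) p a.
  by rewrite /Tsym /Tinner /sum_step2 /sum_step /w; primitive2_ring W2.
rewrite (Tker_sum_step2_const (hW p)) add0r (Tsym_sum_step2_indep hdw p a b p).
pose Q a := Tsym (sum_step2 w p) p a.
rewrite -/(Q a) (@int_step_const _ Q _ a p).
  apply: (eq0_up_to (k := -2) (Tker_diag (hdW (p + 1)) p)).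
  apply: (eq0_up_to (k := -2) (Tker_diag (hWW p) p)).
  by rewrite /Q /Tsym /Tinner /sum_step2 /sum_step /diff_fst /w; primitive2_ring W2.
move=> a'; apply/subr0_eq.
apply: (eq0_up_to (k := -1) (Tker_isum_line (hWW (p + 1)) (p + 1) a' (a' + 1))).
apply: (eq0_up_to (k := -1) (Tker_isum_line (hdW p) (p + 1) a' a')).
apply: (eq0_up_to (k := -1) (Tker_diag (hWW (p + 1)) (a' + 1))).
apply: (eq0_up_to (k := -1) (Tker_diag (hdW (a' + 1 + 1)) p)).
apply: (eq0_up_to (k := 1) (Tker_diag (hdW (a' + 1)) p)).
apply: (eq0_up_to (k := 1) (hdW (p + 1) p a')).
apply: (eq0_up_to (k := -1) (hdW p p a')).
apply: (eq0_up_to (k := 1) (Tker_diag (hWW a') p)).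
apply: (eq0_up_to (k := 1) (hWW p p a')).
apply: (eq0_up_to (k := -1) (Tker_diag (hWW (a' + 1)) p)).
apply: (eq0_up_to (k := -1) (hdW (p + 1) p (a' + 1))).
apply: (eq0_up_to (k := 1) (Tker_diag (hdW p) a')).
apply: (eq0_up_to (k := -1) (hWW p p (a' + 1))).
by rewrite /Q /Tsym /Tinner /sum_step2 /sum_step /diff_fst /w; primitive2_ring W2.
Qed.

End Tkernel.

Definition set_nth2 (k : seq int) i (x y : int) := set_nth 0 (set_nth 0 k i x) i.+1 y.

Section SetNth2.
Implicit Types (k l : seq int) (x y u v : int).

Lemma size_set_nth2 k i x y : (i.+1 < size k)%N -> size (set_nth2 k i x y) = size k.
Proof.
by move=> h; rewrite /set_nth2 !size_set_nth (maxn_idPr (ltnW h)) (maxn_idPr h).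
Qed.

Lemma nth_set_nth2 k i x y j : (i.+1 < size k)%N ->
  nth 0 (set_nth2 k i x y) j = if j == i then x else if j == i.+1 then y else nth 0 k j.
Proof.
move=> h; rewrite /set_nth2 nth_set_nth /= nth_set_nth /=.
by case: (eqVneq j i) => [->|]; first rewrite ltn_eqF.
Qed.

Lemma set_nth2_id k i : (i.+1 < size k)%N -> set_nth2 k i (nth 0 k i) (nth 0 k i.+1) = k.
Proof.
move=> h; apply: (eq_from_nth (x0 := 0)); rewrite ?size_set_nth2 // => j _.
rewrite nth_set_nth2 //; case: (eqVneq j i) => [->//|_].
by case: (eqVneq j i.+1) => [->|].
Qed.

Lemma rcons_set_nth2 l i u v x : (i.+1 < size l)%N ->
  rcons (set_nth2 l i u v) x = set_nth2 (rcons l x) i u v.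
Proof.
move=> h; apply: (eq_from_nth (x0 := 0)).
  by rewrite size_rcons !size_set_nth2 ?size_rcons //; lia.
move=> j _; rewrite nth_rcons size_set_nth2 // !nth_set_nth2 ?size_rcons; try lia.
rewrite nth_rcons.
case: (eqVneq j i) => [->|_]; first by rewrite (ltn_trans (ltnSn i) h).
by case: (eqVneq j i.+1) => [->|]; first rewrite h.
Qed.

Lemma set_nth2_rcons2 l m a b u v : size l = m ->
  set_nth2 (rcons (rcons l a) b) m u v = rcons (rcons l u) v.
Proof. by move=> <-; rewrite /set_nth2; elim: l => [|x l /= ->]. Qed.

Lemma take_set_nth2 k i n u v : (i.+1 < n)%N -> (n <= size k)%N ->
  take n (set_nth2 k i u v) = set_nth2 (take n k) i u v.
Proof.
move=> h1 h2; have h3 : (i.+1 < size k)%N by lia.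
apply: (eq_from_nth (x0 := 0)).
  by rewrite size_takel ?size_set_nth2 ?size_takel //; lia.
move=> j; rewrite size_takel ?size_set_nth2 // => hj.
by rewrite nth_take // !nth_set_nth2 ?size_takel // nth_take.
Qed.

Lemma set_nth_set_nth2_snd k i x y z : set_nth 0 (set_nth2 k i x y) i.+1 z = set_nth2 k i x z.
Proof. by rewrite /set_nth2 set_set_nth eqxx. Qed.

Lemma set_nth_set_nth2_fst k i x y z : set_nth 0 (set_nth2 k i x y) i z = set_nth2 k i z y.
Proof. by rewrite /set_nth2 set_set_nth (gtn_eqF (ltnSn i)) [set_nth 0 _ i z]set_set_nth eqxx. Qed.

End SetNth2.

Lemma take_rcons2 (k : seq int) m : size k = m.+2 ->
  k = rcons (rcons (take m k) (nth 0 k m)) (nth 0 k m.+1).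
Proof. by move=> hk; rewrite -!take_nth ?hk // take_oversize ?hk. Qed.

Lemma take_rcons3 (k : seq int) m : size k = m.+3 ->
  k = rcons (rcons (rcons (take m k) (nth 0 k m)) (nth 0 k m.+1)) (nth 0 k m.+2).
Proof. by move=> hk; rewrite -!take_nth ?hk ?take_oversize ?hk //; lia. Qed.

Section IteratedSum.
Variable V : zmodType.
Implicit Types (A B : seq int -> V) (k : seq int).

(* [msum] with its recursion continued down to m = 0, where it returns A [::]. *)
Fixpoint itsum (m : nat) k A {struct m} : V :=
  match m with
  | 0%N => A [::]
  | m'.+1 =>
      itsum m' (take m'.+1 k)
        (fun l => isum (nth 0 k m' + 1) (nth 0 k m'.+1) (fun x => A (rcons l x)))
      + itsum m' (rcons (take m' k) (nth 0 k m' - 1)) (fun l => A (rcons l (nth 0 k m')))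
  end.

Lemma msumE m k A : (0 < m)%N -> msum m k A = itsum m k A.
Proof.
elim: m k A => [//|[|m] IH] k A _; first by rewrite /= (isum_recl (nth 0 k 0)) addrC.
have -> : msum m.+2 k A =
    msum m.+1 (take m.+2 k)
      (fun l => isum (nth 0 k m.+1 + 1) (nth 0 k m.+2) (fun x => A (rcons l x)))
    + msum m.+1 (rcons (take m.+1 k) (nth 0 k m.+1 - 1)) (fun l => A (rcons l (nth 0 k m.+1))).
  by [].
by rewrite !IH.
Qed.

Lemma eq_itsum m k A B : (forall l, size l = m -> A l = B l) -> itsum m k A = itsum m k B.
Proof.
elim: m k A B => [|m IH] k A B eAB /=; first by rewrite eAB.
congr (_ + _); apply: IH => l hl; last by rewrite eAB // size_rcons hl.
by apply: eq_isum => x; rewrite eAB // size_rcons hl.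
Qed.

Lemma itsum0 m k : itsum m k (fun _ => 0) = 0.
Proof.
elim: m k => [|m IH] k //=.
by rewrite (@eq_itsum _ _ _ (fun _ => 0)) ?IH ?addr0 // => l _; apply: isum0.
Qed.

Lemma itsumD m k A B : itsum m k (fun l => A l + B l) = itsum m k A + itsum m k B.
Proof.
elim: m k A B => [|m IH] k A B //=.
rewrite (@eq_itsum _ _ (fun l => isum _ _ _)
  (fun l => isum (nth 0 k m + 1) (nth 0 k m.+1) (fun x => A (rcons l x)) +
            isum (nth 0 k m + 1) (nth 0 k m.+1) (fun x => B (rcons l x)))); last first.
  by move=> l _; rewrite isumD.
by rewrite !IH addrACA.
Qed.

Lemma itsumN m k A : itsum m k (fun l => - A l) = - itsum m k A.
Proof.
elim: m k A => [|m IH] k A //=.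
rewrite (@eq_itsum _ _ (fun l => isum _ _ _)
  (fun l => - isum (nth 0 k m + 1) (nth 0 k m.+1) (fun x => A (rcons l x)))); last first.
  by move=> l _; rewrite isumN.
by rewrite !IH opprD.
Qed.

Lemma itsumB m k A B : itsum m k (fun l => A l - B l) = itsum m k A - itsum m k B.
Proof. by rewrite itsumD itsumN. Qed.

Lemma itsum_isum m k c d (B : seq int -> int -> V) :
  itsum m k (fun l => isum c d (fun x => B l x)) = isum c d (fun x => itsum m k (fun l => B l x)).
Proof.
apply: (@eq_by_increments _ (fun d => itsum m k (fun l => isum c d (fun x => B l x)))
  (fun d => isum c d (fun x => itsum m k (fun l => B l x))) (fun x => itsum m k (fun l => B l x))
  (c - 1)) => [x|x|].
- by rewrite -itsumD; apply: eq_itsum => l _; apply: isum_recr.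
- exact: isum_recr.
- by rewrite isum_nil (@eq_itsum _ _ _ (fun _ => 0)) ?itsum0 // => l _; apply: isum_nil.
Qed.

Lemma itsum_rcons2 m k c d A : size k = m ->
  itsum m.+1 (rcons (rcons k c) d) A =
  itsum m (rcons k c) (fun l => isum (c + 1) d (fun x => A (rcons l x))) +
  itsum m (rcons k (c - 1)) (fun l => A (rcons l c)).
Proof.
move=> hk /=.
have e1 : take m.+1 (rcons (rcons k c) d) = rcons k c.
  by rewrite -!cats1 -catA take_cat hk ltnNge leqnSn /= subSnn.
have e2 : take m (rcons (rcons k c) d) = k.
  by rewrite -!cats1 -catA take_cat hk ltnn subnn take0 cats0.
have e3 : nth 0 (rcons (rcons k c) d) m = c.
  by rewrite -!cats1 -catA nth_cat hk ltnn subnn.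
have e4 : nth 0 (rcons (rcons k c) d) m.+1 = d.
  by rewrite -!cats1 -catA nth_cat hk ltnNge leqnSn /= subSnn.
by rewrite e1 e2 e3 e4.
Qed.

Lemma itsum_diff_last m k e c B : size k = m ->
  itsum m.+1 (rcons (rcons k e) c) B - itsum m.+1 (rcons (rcons k e) (c - 1)) B =
  itsum m (rcons k e) (fun l => B (rcons l c)).
Proof.
move=> hk; rewrite !itsum_rcons2 // opprD addrACA subrr addr0 -itsumB.
by apply: eq_itsum => l _; rewrite (isum_predr _ c) addrC addKr.
Qed.

End IteratedSum.

Section IteratedSumTker.
Variable C : numDomainType.
Implicit Types (A : seq int -> C) (k l : seq int).

Definition Tker_at n A :=
  forall l i, size l = n -> (i.+1 < n)%N -> Tker (fun u v => A (set_nth2 l i u v)).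

Lemma Tker_itsum m k (B : seq int -> int -> int -> C) :
  (forall l, size l = m -> Tker (B l)) -> Tker (fun u v => itsum m k (fun l => B l u v)).
Proof.
move=> hB u v; rewrite /Tsym /Tinner -!itsumD -!itsumB -itsumD.
by rewrite (@eq_itsum _ _ _ _ (fun _ => 0)) ?itsum0 // => l hl; apply: hB.
Qed.

Lemma Tker_at_last2 m A l : Tker_at m.+2 A -> size l = m ->
  Tker (fun c x => A (rcons (rcons l c) x)).
Proof.
move=> hA hl; have := hA (rcons (rcons l 0) 0) m; rewrite !size_rcons hl.
by move=> /(_ erefl (ltnSn _)); apply: Tker_ext => u v; rewrite set_nth2_rcons2.
Qed.

Lemma Tker_at_last3 m A l x : Tker_at m.+3 A -> size l = m ->
  Tker (fun c y => A (rcons (rcons (rcons l c) y) x)).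
Proof.
move=> hA hl; have := hA (rcons (rcons (rcons l 0) 0) x) m; rewrite !size_rcons hl.
move=> /(_ erefl (ltn_trans (ltnSn _) (ltnSn _))).
by apply: Tker_ext => u v; rewrite -rcons_set_nth2 ?set_nth2_rcons2 // !size_rcons hl.
Qed.

Lemma Tker_diff_itsum m A k : Tker_at m.+1 A -> size k = m ->
  Tker (diff_fst (fun c x => itsum m (rcons k c) (fun l => A (rcons l x)))).
Proof.
case: m => [|m] hA hk.
  by apply: (Tker_ext _ (@Tker0 C)) => u v; rewrite /diff_fst /= subrr.
have ek : k = rcons (take m k) (nth 0 k m) by rewrite -take_nth ?hk // take_oversize ?hk.
have hk' : size (take m k) = m by rewrite size_takel // hk.
apply: (Tker_ext (f := fun c x =>
  itsum m (rcons (take m k) (nth 0 k m)) (fun l => A (rcons (rcons l c) x)))).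
  by move=> u v; rewrite /diff_fst [in RHS]ek itsum_diff_last.
by apply: Tker_itsum => l hl; apply: Tker_at_last2 hA hl.
Qed.

Lemma itsum_Tker_last m A k : Tker_at m.+1 A -> size k = m.+2 ->
  Tker (fun u v => itsum m.+1 (set_nth2 k m u v) A).
Proof.
move=> hA hk; have hk' : size (take m k) = m by rewrite size_takel // hk; lia.
apply: (Tker_ext (f := sum_step (fun c x =>
  itsum m (rcons (take m k) c) (fun l => A (rcons l x))))); last first.
  exact: Tker_sum_step (Tker_diff_itsum hA hk').
move=> u v.
by rewrite [in RHS](take_rcons2 hk) set_nth2_rcons2 // itsum_rcons2 // itsum_isum.
Qed.

Lemma itsum_Tker_mid m A k : Tker_at m.+2 A -> size k = m.+3 ->
  Tker (fun u v => itsum m.+2 (set_nth2 k m u v) A).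
Proof.
move=> hA hk; set k' := take m k; set b := nth 0 k m.+2.
have hk' : size k' = m by rewrite /k' size_takel // hk; lia.
pose W c y x := itsum m (rcons k' c) (fun l => A (rcons (rcons l y) x)).
have hdW x : Tker (diff_fst (fun c y => W c y x)).
  case: m hA k hk @k' @b hk' @W => [|m] hA k hk k' b hk' W.
    by apply: (Tker_ext _ (@Tker0 C)) => u v; rewrite /diff_fst /W /= subrr.
  have ek' : k' = rcons (take m k') (nth 0 k' m).
    by rewrite -take_nth ?hk' // take_oversize ?hk'.
  have hk'' : size (take m k') = m by rewrite size_takel // hk'.
  apply: (Tker_ext (f := fun c y => itsum m (rcons (take m k') (nth 0 k' m))
            (fun l => A (rcons (rcons (rcons l c) y) x)))).
    by move=> u v; rewrite /diff_fst /W [in RHS]ek' itsum_diff_last.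
  by apply: (Tker_itsum _ (B := fun l c y => A (rcons (rcons (rcons l c) y) x))) => l hl;
    apply: Tker_at_last3 hA hl.
have hW c : Tker (W c).
  by apply: (Tker_itsum _ (B := fun l y x => A (rcons (rcons l y) x))) => l hl;
    apply: Tker_at_last2 hA hl.
apply: (Tker_ext (f := sum_step2 W b)); last exact: Tker_sum_step2 hW hdW b.
move=> u v.
have hk'u : size (rcons k' u) = m.+1 by rewrite size_rcons hk'.
have slice c x : itsum m.+1 (rcons (rcons k' u) c) (fun l => A (rcons l x)) =
    sum_step (fun c' y => W c' y x) u c.
  by rewrite itsum_rcons2 // itsum_isum.
rewrite [in RHS](take_rcons3 hk) -/k' -/b -rcons_set_nth2 ?size_rcons ?hk' //.
by rewrite set_nth2_rcons2 // itsum_rcons2 // itsum_isum slice (eq_isum _ _ (slice v)).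
Qed.

Lemma itsum_Tker_low m A k i : Tker_at m.+1 A ->
  (forall A', Tker_at m A' -> forall k' i', size k' = m.+1 -> (i' < m)%N ->
     Tker (fun u v => itsum m (set_nth2 k' i' u v) A')) ->
  size k = m.+2 -> (i.+1 < m)%N ->
  Tker (fun u v => itsum m.+1 (set_nth2 k i u v) A).
Proof.
move=> hA IH hk hi.
pose B1 l := isum (nth 0 k m + 1) (nth 0 k m.+1) (fun x => A (rcons l x)).
pose B2 l := A (rcons l (nth 0 k m)).
have hB1 : Tker_at m B1.
  move=> l j hl hj; rewrite /B1.
  apply: (Tker_ext (f := fun u v => isum (nth 0 k m + 1) (nth 0 k m.+1)
             (fun x => A (set_nth2 (rcons l x) j u v)))).
    by move=> u v; apply: eq_isum => x; rewrite rcons_set_nth2 // hl; lia.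
  apply: (Tker_isum _ _ (F := fun x u v => A (set_nth2 (rcons l x) j u v))) => x.
  by apply: hA; rewrite ?size_rcons ?hl //; lia.
have hB2 : Tker_at m B2.
  move=> l j hl hj; rewrite /B2.
  apply: (Tker_ext (f := fun u v => A (set_nth2 (rcons l (nth 0 k m)) j u v))).
    by move=> u v; rewrite rcons_set_nth2 // hl; lia.
  by apply: hA; rewrite ?size_rcons ?hl //; lia.
have s1 : size (take m.+1 k) = m.+1 by rewrite size_takel // hk.
have s2 : size (rcons (take m k) (nth 0 k m - 1)) = m.+1.
  by rewrite size_rcons size_takel // hk; lia.
have hi' : (i < m)%N by lia.
apply: (Tker_ext (f := fun u v => itsum m (set_nth2 (take m.+1 k) i u v) B1 +
   itsum m (set_nth2 (rcons (take m k) (nth 0 k m - 1)) i u v) B2)); last first.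
  exact: TkerD (IH _ hB1 _ _ s1 hi') (IH _ hB2 _ _ s2 hi').
move=> u v /=.
have hki : (i.+1 < size k)%N by rewrite hk; lia.
rewrite !nth_set_nth2 //.
have [-> -> -> ->] : [/\ (m == i) = false, (m == i.+1) = false,
    (m.+1 == i) = false & (m.+1 == i.+1) = false] by split; apply/eqP; lia.
rewrite !take_set_nth2 ?hk //; try lia.
by rewrite rcons_set_nth2 // size_takel ?hk //; lia.
Qed.

Lemma itsum_Tker n A : Tker_at n A -> forall k i, size k = n.+1 -> (i < n)%N ->
  Tker (fun u v => itsum n (set_nth2 k i u v) A).
Proof.
elim: n A => [//|m IH] A hA k i hk hi.
case: (ltngtP i.+1 m) => h.
- exact: itsum_Tker_low hA IH hk h.
- have -> : i = m by lia.
  exact: itsum_Tker_last hA hk.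
- by subst m; exact: itsum_Tker_mid hA hk.
Qed.

Lemma Tp_set_nth2 (F : seq int -> C) l i u v : (i.+1 < size l)%N ->
  Tp i i.+1 F (set_nth2 l i u v) = Tsym (fun x y => F (set_nth2 l i x y)) u v.
Proof.
move=> hl.
have inner x y : F (set_nth2 l i x y) + Eop i.+1 (Dop i F) (set_nth2 l i x y) =
    Tinner (fun x y => F (set_nth2 l i x y)) x y.
  rewrite /Eop /Dop /Eop /Tinner set_nth_set_nth2_snd !nth_set_nth2 // !eqxx.
  by rewrite (gtn_eqF (ltnSn i)) set_nth_set_nth2_fst; ring.
rewrite /Tp /Sop /swapl !nth_set_nth2 // !eqxx (gtn_eqF (ltnSn i)).
by rewrite set_nth_set_nth2_fst set_nth_set_nth2_snd /Tsym -!inner.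
Qed.

Lemma TpE (F : seq int -> C) k i : (i.+1 < size k)%N ->
  Tp i i.+1 F k = Tsym (fun x y => F (set_nth2 k i x y)) (nth 0 k i) (nth 0 k i.+1).
Proof. by move=> hk; rewrite -{1}(set_nth2_id hk) Tp_set_nth2. Qed.

End IteratedSumTker.

(* Coordinates are 0-based: the paper's T'_{l_i,l_{i+1}} (1 <= i) is Tp (i-1) i. *)
Theorem corollary1 (R : realType) (n : nat) (A : seq int -> R[i]) :
  (1 <= n)%N ->
  (forall (i : nat) (l : seq int), size l = n -> (i.+1 < n)%N ->
     Tp i i.+1 A l = 0) ->
  forall (i : nat) (k : seq int), size k = n.+1 -> (i < n)%N ->
    Tp i i.+1 (fun k' => msum n k' A) k = 0.
Proof.
move=> hn hA i k hk hi.
have hA' : Tker_at n A.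
  move=> l j hl hj u v; rewrite -Tp_set_nth2 ?hl //.
  by apply: hA; rewrite ?size_set_nth2 ?hl.
have := itsum_Tker hA' hk hi (nth 0 k i) (nth 0 k i.+1).
by rewrite TpE ?hk // /Tsym /Tinner !msumE.
Qed.
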